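(* Let $k$ be a field of characteristic $0$ and let $F(X,Y), G(X,Y)\in k[X,Y]$ be such that the determinant of the Jacobian matrix $\begin{pmatrix}\partial F/\partial X & \partial F/\partial Y\\ \partial G/\partial X & \partial G/\partial Y\end{pmatrix}$ is a nonzero element of $k$. Then the system $$F(\mathcal{U}(t),\mathcal{V}(t))=tX+(1-t)F(X,Y),\qquad G(\mathcal{U}(t),\mathcal{V}(t))=tY+(1-t)G(X,Y),$$ with initial conditions $\mathcal{U}(0)=X$, $\mathcal{V}(0)=Y$, has a unique solution $\mathcal{U}(t),\mathcal{V}(t)\in k[X,Y][[t]]$.
   Context: $k[X,Y][[t]]$ denotes the ring of formal power series in $t$ with coefficients in $k[X,Y]$; for a power series, evaluation at $t=0$ means taking its constant term. *)

From HB Require Import structures.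
From mathcomp Require Import all_boot all_order all_algebra.
From mathcomp Require Import mpoly.
Set Implicit Arguments. Unset Strict Implicit. Unset Printing Implicit Defensive.
Import GRing.Theory.
Local Open Scope ring_scope.

(* Formal power series in t over a ring R, given by their coefficient
   sequences: U = \sum_n (U n) t^n.  We use R := k[X,Y] = {mpoly k[2]},
   with X = 'X_0 and Y = 'X_1. *)
Definition pseries (R : Type) := nat -> R.

Definition ptrunc (R : nzRingType) (n : nat) (U : pseries R) : {poly R} :=
  \poly_(i < n.+1) U i.

Definition ser_of_poly (R : nzRingType) (p : {poly R}) : pseries R :=
  fun n => p`_n.

Definition eval2poly (k : fieldType) (F : {mpoly k[2]})
    (a b : {poly {mpoly k[2]}}) : {poly {mpoly k[2]}} :=
  mmap (fun c : k => (c%:MP)%:P) (fun i : 'I_2 => if val i == 0%N then a else b) F.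

(* F(U(t), V(t)) for F in k[X,Y] and U, V in k[X,Y][[t]]: the n-th coefficient
   of the substitution only depends on U, V modulo t^(n+1). *)
Definition eval2 (k : fieldType) (F : {mpoly k[2]})
    (U V : pseries {mpoly k[2]}) : pseries {mpoly k[2]} :=
  fun n => (eval2poly F (ptrunc n U) (ptrunc n V))`_n.

Definition jacdet (k : fieldType) (F G : {mpoly k[2]}) : {mpoly k[2]} :=
  F^`M(0) * G^`M(1) - F^`M(1) * G^`M(0).

From HB Require Import structures.
From mathcomp Require Import all_boot all_order all_algebra.
From mathcomp Require Import mpoly.
From mathcomp Require Import ring.
From Stdlib Require Import FunctionalExtensionality.
Import GRing.Theory.
Local Open Scope ring_scope.

(* Write U = X + u_1 t + u_2 t^2 + ... and V = Y + v_1 t + v_2 t^2 + ... .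
   Modulo t^(n+2), F(U, V) = F(U_<=n, V_<=n) + t^(n+1) (F_X u_(n+1) + F_Y v_(n+1)),
   so the coefficients of t^(n+1) in the system form a linear system for
   (u_(n+1), v_(n+1)) whose matrix is the Jacobian matrix of (F, G) and whose
   right-hand side only involves earlier coefficients.  The Jacobian
   determinant is a nonzero constant, hence a unit of k[X,Y], so by Cramer's
   rule each of these systems has exactly one solution, and the solution of
   the whole system is defined by course-of-values recursion.  At t = 0 the
   system holds as soon as U(0) = X and V(0) = Y. *)

Lemma mpoly_ring_ind (R : nzRingType) n (P : {mpoly R[n]} -> Prop) :
  (forall c, P c%:MP) -> (forall i, P 'X_i) ->
  (forall p q, P p -> P q -> P (p + q)) ->
  (forall p q, P p -> P q -> P (p * q)) -> forall p, P p.
Proof.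
move=> PC PX PD PM; have P1 : P 1 by rewrite -mpolyC1.
elim/mpolyind => [|c m p _ _ Pp]; first by rewrite -mpolyC0.
apply: (PD _ _ _ Pp); rewrite -mul_mpolyC; apply: (PM) => //.
rewrite mpolyXE_id; apply: (big_ind P P1 PM) => i _.
by elim: (m i) => [|e IH]; rewrite ?expr0 ?exprS //; exact: PM.
Qed.

Lemma mpoly2_ind (R : nzRingType) (P : {mpoly R[2]} -> Prop) :
  (forall c, P c%:MP) -> P 'X_0 -> P 'X_1 ->
  (forall p q, P p -> P q -> P (p + q)) ->
  (forall p q, P p -> P q -> P (p * q)) -> forall p, P p.
Proof.
move=> PC PX0 PX1; apply: mpoly_ring_ind => // -[[|[|//]] i_lt2].
- by rewrite (_ : Ordinal _ = 0) //; apply: val_inj.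
- by rewrite (_ : Ordinal _ = 1) //; apply: val_inj.
Qed.

Lemma mderiv_mpolyX (R : nzRingType) n (i j : 'I_n) :
  ('X_i : {mpoly R[n]})^`M(j) = if i == j then 1 else 0.
Proof.
rewrite /mpolyX mderivX mnm1E; case: eqP => [->|_]; last by rewrite scale0r.
have -> : (U_(j) - U_(j))%MM = 0%MM by apply/mnmP => l; rewrite mnmBE subnn mnm0E.
by rewrite mpolyX0 scale1r.
Qed.

Section Truncation.
Variable R : nzRingType.
Implicit Type U : pseries R.

Lemma coef_ptrunc n U i : (ptrunc n U)`_i = if (i <= n)%N then U i else 0.
Proof. by rewrite coef_poly ltnS. Qed.

Lemma ptrunc0 U : ptrunc 0 U = (U 0%N)%:P.
Proof. by apply/polyP => -[|i]; rewrite coef_ptrunc coefC. Qed.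

Lemma ptruncS n U : ptrunc n.+1 U = ptrunc n U + U n.+1 *: 'X^(n.+1).
Proof.
apply/polyP => i; rewrite coefD coefZ coefXn !coef_ptrunc leq_eqVlt ltnS.
by case: eqP => [->|_]; rewrite ?leqnn ?ltnn ?mulr1 ?mulr0 ?add0r ?addr0.
Qed.

End Truncation.

Section CourseOfValues.
Variables (R : nzRingType) (x0 y0 : R).
Variable step : nat -> {poly R} * {poly R} -> R * R.

Definition rec_coefs (UV : pseries R * pseries R) :=
  [/\ UV.1 0%N = x0, UV.2 0%N = y0 &
      forall n, (UV.1 n.+1, UV.2 n.+1) = step n (ptrunc n UV.1, ptrunc n UV.2)].

Fixpoint rec_trunc n : {poly R} * {poly R} :=
  if n is m.+1 then
    ((rec_trunc m).1 + (step m (rec_trunc m)).1 *: 'X^(m.+1),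
     (rec_trunc m).2 + (step m (rec_trunc m)).2 *: 'X^(m.+1))
  else (x0%:P, y0%:P).

Lemma ptrunc_rec_coefs {UV} : rec_coefs UV ->
  forall n, (ptrunc n UV.1, ptrunc n UV.2) = rec_trunc n.
Proof.
case=> U0 V0 Hstep; elim=> [|n IH]; first by rewrite !ptrunc0 U0 V0.
by rewrite /= -IH -(Hstep n) !ptruncS.
Qed.

Definition rec_sol : pseries R * pseries R :=
  (fun n => if n is m.+1 then (step m (rec_trunc m)).1 else x0,
   fun n => if n is m.+1 then (step m (rec_trunc m)).2 else y0).

Lemma ptrunc_rec_sol n :
  (ptrunc n rec_sol.1, ptrunc n rec_sol.2) = rec_trunc n.
Proof.
elim: n => [|n IH]; first by rewrite !ptrunc0.
by rewrite !ptruncS /= -IH.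
Qed.

Lemma pseries2_rec_unique : exists! UV, rec_coefs UV.
Proof.
exists rec_sol; split; first by split=> // n; rewrite ptrunc_rec_sol -surjective_pairing.
move=> [U V] UV_rec; have [/= U0 V0 Hstep] := UV_rec.
have /= Htrunc := ptrunc_rec_coefs UV_rec.
congr pair; apply: functional_extensionality => -[|n] //=.
- by have := congr1 fst (Hstep n); rewrite /= Htrunc.
- by have := congr1 snd (Hstep n); rewrite /= Htrunc.
Qed.

End CourseOfValues.

Section Evaluation.
Variable k : fieldType.
Local Notation R := {mpoly k[2]}.
Implicit Types (F : R) (a b : {poly R}).

Let const_poly : {rmorphism k -> {poly R}} := (@polyC R \o @mpolyC 2 k)%FUN.

Lemma eval2polyE F a b :
  eval2poly F a b = mmap const_poly (fun i : 'I_2 => if val i == 0%N then a else b) F.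
Proof. by []. Qed.

Lemma eval2polyD F G a b : eval2poly (F + G) a b = eval2poly F a b + eval2poly G a b.
Proof. by rewrite !eval2polyE rmorphD. Qed.

Lemma eval2polyM F G a b : eval2poly (F * G) a b = eval2poly F a b * eval2poly G a b.
Proof. by rewrite !eval2polyE rmorphM. Qed.

Lemma eval2polyC (c : k) a b : eval2poly c%:MP a b = (c%:MP)%:P.
Proof. by rewrite eval2polyE mmapC. Qed.

Lemma eval2polyX0 a b : eval2poly 'X_0 a b = a.
Proof. by rewrite eval2polyE /mpolyX mmapX mmap1U. Qed.

Lemma eval2polyX1 a b : eval2poly 'X_1 a b = b.
Proof. by rewrite eval2polyE /mpolyX mmapX mmap1U. Qed.

Lemma eval2poly_coef0 a b : a`_0 = 'X_0 -> b`_0 = 'X_1 ->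
  forall F, (eval2poly F a b)`_0 = F.
Proof.
move=> a0 b0; elim/(@mpoly2_ind k) => [c|||p q Pp Pq|p q Pp Pq].
- by rewrite eval2polyC coefC.
- by rewrite eval2polyX0.
- by rewrite eval2polyX1.
- by rewrite eval2polyD coefD; congr (_ + _).
- by rewrite eval2polyM coef0M; congr (_ * _).
Qed.

Lemma eval2poly_perturb n a b u v : (0 < n)%N -> a`_0 = 'X_0 -> b`_0 = 'X_1 ->
  forall F, exists2 Q, eval2poly F (a + u *: 'X^n) (b + v *: 'X^n)
                         = eval2poly F a b + 'X^n * Q
                     & Q`_0 = F^`M(0) * u + F^`M(1) * v.
Proof.
move=> n_gt0 a0 b0.
elim/(@mpoly2_ind k) => [c|||p q [Qp Ep Qp0] [Qq Eq Qq0]|p q [Qp Ep Qp0] [Qq Eq Qq0]].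
- by exists 0; rewrite ?eval2polyC ?mulr0 ?addr0 // coef0 !mderivC !mul0r addr0.
- exists u%:P; first by rewrite !eval2polyX0 mulrC mul_polyC.
  by rewrite coefC !mderiv_mpolyX /= mul1r mul0r addr0.
- exists v%:P; first by rewrite !eval2polyX1 mulrC mul_polyC.
  by rewrite coefC !mderiv_mpolyX /= mul1r mul0r add0r.
- exists (Qp + Qq); first by rewrite !eval2polyD Ep Eq mulrDr addrACA.
  by rewrite coefD Qp0 Qq0 !mderivD; ring.
- exists (Qp * (eval2poly q a b + 'X^n * Qq) + eval2poly p a b * Qq).
    (* generalized so that ring does not unfold eval2poly to compare atoms *)
    rewrite !eval2polyM Ep Eq.
    by move: (eval2poly p a b) (eval2poly q a b) => ep eq; ring.
  rewrite coefD !coef0M coefD coefXnM n_gt0 addr0 Qp0 Qq0 !mderivM.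
  transitivity ((p^`M(0) * u + p^`M(1) * v) * q + p * (q^`M(0) * u + q^`M(1) * v)).
    by congr (_ * _ + _ * _); apply: eval2poly_coef0.
  ring.
Qed.

Lemma coef_eval2_0 F (U V : pseries R) : U 0%N = 'X_0 -> V 0%N = 'X_1 ->
  eval2 F U V 0 = F.
Proof. by move=> U0 V0; rewrite /eval2 !ptrunc0 eval2poly_coef0 // coefC. Qed.

Lemma coef_eval2S F (U V : pseries R) n : U 0%N = 'X_0 -> V 0%N = 'X_1 ->
  eval2 F U V n.+1 = (eval2poly F (ptrunc n U) (ptrunc n V))`_n.+1
                     + (F^`M(0) * U n.+1 + F^`M(1) * V n.+1).
Proof.
move=> U0 V0; rewrite /eval2 !ptruncS.
have [||Q -> Q0] :=
  eval2poly_perturb n.+1 (ptrunc n U) (ptrunc n V) (U n.+1) (V n.+1) (ltn0Sn n) _ _ F;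
  rewrite ?coef_ptrunc ?leq0n //.
by rewrite coefD coefXnM ltnn subnn Q0.
Qed.

End Evaluation.

Lemma cramer_rule2 (R : comPzRingType) (a b c d e f x y di : R) :
  di * (a * d - b * c) = 1 ->
  (a * x + b * y = e /\ c * x + d * y = f) <->
  (x = di * (d * e - b * f) /\ y = di * (a * f - c * e)).
Proof.
move=> det_inv; split=> [[<- <-]|[-> ->]]; split.
- by rewrite -[LHS]mul1r -det_inv; ring.
- by rewrite -[LHS]mul1r -det_inv; ring.
- by rewrite -[RHS]mul1r -det_inv; ring.
- by rewrite -[RHS]mul1r -det_inv; ring.
Qed.

Lemma addr_eqr_iff (R : zmodType) (a x r : R) : a + x = r <-> x = r - a.
Proof. by split=> [<-|->]; rewrite addrC ?addKr ?subrK. Qed.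

Section HomotopySystem.
Variable k : fieldType.
Local Notation R := {mpoly k[2]}.
Variables (F G : R) (c : k) (rF rG : pseries R).
Hypotheses (c_neq0 : c != 0) (jacFG : jacdet F G = c%:MP).

Definition next_coefs n (ab : {poly R} * {poly R}) : R * R :=
  let eF := rF n.+1 - (eval2poly F ab.1 ab.2)`_n.+1 in
  let eG := rG n.+1 - (eval2poly G ab.1 ab.2)`_n.+1 in
  ((c^-1)%:MP * (G^`M(1) * eF - F^`M(1) * eG),
   (c^-1)%:MP * (F^`M(0) * eG - G^`M(0) * eF)).

Lemma eval2_coefS_iff (U V : pseries R) n : U 0%N = 'X_0 -> V 0%N = 'X_1 ->
  (eval2 F U V n.+1 = rF n.+1 /\ eval2 G U V n.+1 = rG n.+1) <->
  (U n.+1, V n.+1) = next_coefs n (ptrunc n U, ptrunc n V).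
Proof.
move=> U0 V0; rewrite !coef_eval2S // pair_equal_spec.
rewrite (addr_eqr_iff _ _ _ (rF _)) (addr_eqr_iff _ _ _ (rG _)); apply: cramer_rule2.
by rewrite -/(jacdet F G) jacFG -mpolyCM mulVf // mpolyC1.
Qed.

Lemma eval2_system_iff (U V : pseries R) :
  U 0%N = 'X_0 -> V 0%N = 'X_1 -> rF 0%N = F -> rG 0%N = G ->
  (eval2 F U V = rF /\ eval2 G U V = rG) <->
  forall n, (U n.+1, V n.+1) = next_coefs n (ptrunc n U, ptrunc n V).
Proof.
move=> U0 V0 rF0 rG0; split=> [[EF EG] n|Hrec].
  by apply/eval2_coefS_iff; rewrite ?EF ?EG.
have coefS n := proj2 (eval2_coefS_iff _ _ n U0 V0) (Hrec n).
split; apply: functional_extensionality => -[|n]; rewrite ?coef_eval2_0 //.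
- by case: (coefS n).
- by case: (coefS n).
Qed.

Lemma homotopy_system_unique : rF 0%N = F -> rG 0%N = G ->
  exists! UV : pseries R * pseries R,
    [/\ UV.1 0%N = 'X_0, UV.2 0%N = 'X_1,
        eval2 F UV.1 UV.2 = rF & eval2 G UV.1 UV.2 = rG].
Proof.
move=> rF0 rG0.
have [UV [[U0 V0 Hrec] UV_unique]] := @pseries2_rec_unique R 'X_0 'X_1 next_coefs.
exists UV; split.
  by have [EF EG] := proj2 (eval2_system_iff _ _ U0 V0 rF0 rG0) Hrec.
move=> UV' [U0' V0' EF EG]; apply: UV_unique; split=> //.
exact/(eval2_system_iff _ _ U0' V0' rF0 rG0).
Qed.

End HomotopySystem.

Lemma ser_of_poly_interp0 (R : nzRingType) (A Z : R) :
  ser_of_poly ('X * Z%:P + (1 - 'X) * A%:P) 0%N = A.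
Proof.
rewrite /ser_of_poly coefD !coef0M coefB coef1 coefX !coefC /=.
by rewrite mul0r add0r subr0 mul1r.
Qed.

Theorem theorem3p2 (k : fieldType) (Hchar : [pchar k] =i pred0)
    (F G : {mpoly k[2]})
    (HJ : exists c : k, c != 0 /\ jacdet F G = c%:MP) :
  exists! UV : pseries {mpoly k[2]} * pseries {mpoly k[2]},
    [/\ UV.1 0%N = 'X_0, UV.2 0%N = 'X_1,
        eval2 F UV.1 UV.2 = ser_of_poly ('X * ('X_0)%:P + (1 - 'X) * F%:P)
      & eval2 G UV.1 UV.2 = ser_of_poly ('X * ('X_1)%:P + (1 - 'X) * G%:P)].
Proof.
have [c [c_neq0 jacFG]] := HJ.
by apply: homotopy_system_unique c_neq0 jacFG _ _; apply: ser_of_poly_interp0.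
Qed.
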